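(* Let $\mathfrak{S}=(\mathcal{X},\mathsf{S},\gamma,(\Lambda_{a})_{a\in\mathcal{A}})$ be a spectral decomposition system for the Euclidean space $\mathfrak{H}$ with spectral-induced ordering mapping $\tau$, and let $x,y\in\mathcal{X}$. Then the following are equivalent: (i) $y\in\operatorname{conv}(\mathsf{S}\cdot x)$; (ii) $\langle y,z\rangle\leq\langle\tau(x),\tau(z)\rangle$ for every $z\in\mathcal{X}$. Moreover, if $x$ and $y$ both lie in the range of $\gamma$, then each of (i) and (ii) is equivalent to (iii) $\langle y-x,z\rangle\leq 0$ for every $z$ in the range of $\gamma$.
   Context: A Euclidean space is a finite-dimensional real inner product space; inner products are written $\langle\cdot,\cdot\rangle$ and norms $\|\cdot\|$. Let $\mathfrak{H}$ and $\mathcal{X}$ be Euclidean spaces, let $\mathsf{S}$ be a group acting on $\mathcal{X}$ by linear isometries, let $\gamma\colon\mathfrak{H}\to\mathcal{X}$, and let $(\Lambda_a)_{a\in\mathcal{A}}$ be a family of linear operators from $\mathcal{X}$ to $\mathfrak{H}$. The orbit of $x$ is $\mathsf{S}\cdot x=\{s\cdot x: s\in\mathsf{S}\}$; a map $f$ on $\mathcal{X}$ is $\mathsf{S}$-invariant if $f(s\cdot x)=f(x)$ for all $s,x$. The tuple is a spectral decomposition system for $\mathfrak{H}$ if: [A] every $\Lambda_a$ is an isometry; [B] there exists an $\mathsf{S}$-invariant $\tau\colon\mathcal{X}\to\mathcal{X}$ with $\tau(x)\in\mathsf{S}\cdot x$ for all $x$ and $\gamma\circ\Lambda_a=\tau$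 for all $a$; [C] for every $X\in\mathfrak{H}$ there is $a$ with $X=\Lambda_a\gamma(X)$; [D] $\langle X,Y\rangle\leq\langle\gamma(X),\gamma(Y)\rangle$ for all $X,Y\in\mathfrak{H}$. The map $\tau$ in [B] is the spectral-induced ordering mapping. $\operatorname{conv}$ denotes convex hull. *)

From HB Require Import structures.
From mathcomp Require Import all_boot all_order all_algebra.
From mathcomp Require Import reals.
Set Implicit Arguments. Unset Strict Implicit. Unset Printing Implicit Defensive.
Import Order.TTheory GRing.Theory Num.Theory.
Local Open Scope ring_scope.

Section Defs.
Variable R : realType.

(** Together with
    [V : vectType R] (finite dimension) this makes [(V, ip)] a Euclidean space. *)
Definition inner_product (V : lmodType R) (ip : V -> V -> R) : Prop :=
  [/\ forall u v, ip u v = ip v u,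
      forall a u v w, ip (a *: u + v) w = a * ip u w + ip v w,
      forall u, 0 <= ip u u
    & forall u, ip u u = 0 -> u = 0].

Definition ipnorm (V : lmodType R) (ip : V -> V -> R) (u : V) : R :=
  Num.sqrt (ip u u).

Definition is_linear_map (U V : lmodType R) (f : U -> V) : Prop :=
  forall a u v, f (a *: u + v) = a *: f u + f v.

Definition linear_isometry (U V : lmodType R) (ipU : U -> U -> R)
    (ipV : V -> V -> R) (f : U -> V) : Prop :=
  is_linear_map f /\ forall u, ipnorm ipV (f u) = ipnorm ipU u.

Definition is_group (G : Type) (mul : G -> G -> G) (inv : G -> G) (e : G) : Prop :=
  [/\ forall g h k, mul g (mul h k) = mul (mul g h) k,
      forall g, mul e g = g /\ mul g e = g
    & forall g, mul (inv g) g = e /\ mul g (inv g) = e].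

Definition isometric_action (G : Type) (mul : G -> G -> G) (e : G)
    (X : lmodType R) (ipX : X -> X -> R) (act : G -> X -> X) : Prop :=
  [/\ forall x, act e x = x,
      forall g h x, act (mul g h) x = act g (act h x)
    & forall g, linear_isometry ipX ipX (act g)].

Definition orbitS (G X : Type) (act : G -> X -> X) (x : X) : X -> Prop :=
  fun y => exists g, y = act g x.

Definition S_invariant (G X Y : Type) (act : G -> X -> X) (f : X -> Y) : Prop :=
  forall g x, f (act g x) = f x.

Definition conv (V : lmodType R) (A : V -> Prop) : V -> Prop :=
  fun y => exists (n : nat) (w : 'I_n -> R) (p : 'I_n -> V),
    [/\ forall i, 0 <= w i, \sum_(i < n) w i = 1, forall i, A (p i)
      & y = \sum_(i < n) w i *: p i].

Definition in_range (U V : Type) (f : U -> V) (v : V) : Prop :=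
  exists u, v = f u.

(** [(X, S, gamma, (Lambda_a)_a)] is a spectral decomposition system for the
    Euclidean space [(H, ipH)] whose spectral-induced ordering mapping is [tau]
    (conditions [A]-[D]; condition [B] is stated with the witness [tau]). *)
Definition spectral_decomposition_system_with
    (H : vectType R) (ipH : H -> H -> R)
    (X : vectType R) (ipX : X -> X -> R)
    (G : Type) (act : G -> X -> X)
    (gamma : H -> X) (Aidx : Type) (Lambda : Aidx -> X -> H)
    (tau : X -> X) : Prop :=
  [/\ (* [A] *) forall a, linear_isometry ipX ipH (Lambda a),
      (* [B] *) [/\ S_invariant act tau,
                    forall x, orbitS act x (tau x)
                  & forall a x, gamma (Lambda a x) = tau x],
      (* [C] *) forall Y : H, exists a, Y = Lambda a (gamma Y)
    & (* [D] *) forall Y Z : H, ipH Y Z <= ipX (gamma Y) (gamma Z)].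

Definition spectral_decomposition_system
    (H : vectType R) (ipH : H -> H -> R)
    (X : vectType R) (ipX : X -> X -> R)
    (G : Type) (act : G -> X -> X)
    (gamma : H -> X) (Aidx : Type) (Lambda : Aidx -> X -> H) : Prop :=
  exists tau, spectral_decomposition_system_with ipH ipX act gamma Lambda tau.

End Defs.

(* (i) => (ii): conditions [A], [B] and [D] give <u, z> <= <tau u, tau z>
   for all u, z; as tau is S-invariant this bounds <a, z> on the orbit S.x,
   and the bound passes to convex combinations.
   (ii) => (i): the bound <tau x, tau z> is attained on the orbit, which lies
   on a sphere.  A subset of a sphere on which every linear functional attains
   its maximum is compact, so the convex combinations of dim X + 1 of its
   points form a compact set, which by Caratheodory is convex.  The point p of
   it nearest to y satisfies <y - p, a - p> <= 0 on the orbit, and (ii) for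
   z = y - p then forces y = p.
   (iii): tau fixes the range of gamma and maps onto it, so z may be
   restricted to that range. *)

From HB Require Import structures.
From mathcomp Require Import all_boot all_order all_algebra.
From mathcomp Require Import all_classical all_reals topology normedtype derive.
From mathcomp Require Import lra.
Import Order.TTheory GRing.Theory Num.Theory.
Import VectorInternalTheory.
Import numFieldTopology.Exports numFieldNormedType.Exports.
Set Implicit Arguments. Unset Strict Implicit. Unset Printing Implicit Defensive.
Local Open Scope ring_scope.

Section InnerProduct.
Variables (R : realType) (V : lmodType R) (ip : V -> V -> R).
Hypothesis hip : inner_product ip.

Lemma ipC u v : ip u v = ip v u.
Proof. by case: hip. Qed.

Lemma ipDZl a u v w : ip (a *: u + v) w = a * ip u w + ip v w.
Proof. by case: hip. Qed.

Lemma ip_ge0 u : 0 <= ip u u.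
Proof. by case: hip. Qed.

Lemma ip_eq0 u : ip u u = 0 -> u = 0.
Proof. by case: hip => _ _ _; apply. Qed.

Lemma ip0l w : ip 0 w = 0.
Proof.
have := ipDZl 1 0 0 w; rewrite scale1r addr0 mul1r.
by move/(congr1 (fun t => t - ip 0 w)); rewrite subrr addrK.
Qed.

Lemma ipDl u v w : ip (u + v) w = ip u w + ip v w.
Proof. by rewrite -[u]scale1r ipDZl mul1r scale1r. Qed.

Lemma ipZl a u w : ip (a *: u) w = a * ip u w.
Proof. by rewrite -[a *: u]addr0 ipDZl ip0l addr0. Qed.

Lemma ipBl u v w : ip (u - v) w = ip u w - ip v w.
Proof. by rewrite ipDl -scaleN1r ipZl mulN1r. Qed.

Lemma ipDr u v w : ip w (u + v) = ip w u + ip w v.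
Proof. by rewrite !(ipC w) ipDl. Qed.

Lemma ipZr a u w : ip w (a *: u) = a * ip w u.
Proof. by rewrite !(ipC w) ipZl. Qed.

Lemma ipBr u v w : ip w (u - v) = ip w u - ip w v.
Proof. by rewrite !(ipC w) ipBl. Qed.

Lemma ip_suml (I : Type) (r : seq I) (P : pred I) (F : I -> V) w :
  ip (\sum_(i <- r | P i) F i) w = \sum_(i <- r | P i) ip (F i) w.
Proof. exact: (big_morph (ip^~ w) (fun u v => ipDl u v w) (ip0l w)). Qed.

Lemma ip_self_le0_eq0 u : ip u u <= 0 -> u = 0.
Proof. by move=> le0; apply: ip_eq0; apply/le_anti; rewrite le0 ip_ge0. Qed.

Lemma ip_le0_of_segment_min d u :
  (forall t, 0 <= t <= 1 -> ip d d <= ip (d - t *: u) (d - t *: u)) ->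
  ip d u <= 0.
Proof.
move=> d_min; rewrite leNgt; apply/negP => du_gt0.
have uu_ge0 := ip_ge0 u; set b := ip d u in du_gt0; set Q := ip u u in uu_ge0.
have bQ_gt0 : 0 < b + Q by rewrite ltr_wpDr.
pose t := b / (b + Q).
have t_gt0 : 0 < t by rewrite divr_gt0.
have t_le1 : t <= 1 by rewrite ler_pdivrMr // mul1r lerDl.
have tQ : t * Q = b - t * b.
  by rewrite -[X in X - _](divfK (lt0r_neq0 bQ_gt0)) -/t mulrDr addrC addKr.
have := d_min t; rewrite (ltW t_gt0) t_le1 => /(_ isT).
rewrite !ipBl !ipBr !ipZl !ipZr (ipC u d) -/b -/Q tQ mulrBr.
have := mulr_gt0 t_gt0 du_gt0; have := mulr_gt0 t_gt0 (mulr_gt0 t_gt0 du_gt0).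
lra.
Qed.

End InnerProduct.

Lemma linear_isometry_ip (R : realType) (U V : lmodType R)
    (ipU : U -> U -> R) (ipV : V -> V -> R) (f : U -> V) :
  inner_product ipU -> inner_product ipV -> linear_isometry ipU ipV f ->
  forall u v, ipV (f u) (f v) = ipU u v.
Proof.
move=> hU hV [flin fnorm].
have fD u v : f (u + v) = f u + f v by rewrite -[u]scale1r flin !scale1r.
have fsq u : ipV (f u) (f u) = ipU u u.
  by rewrite -(sqr_sqrtr (ip_ge0 hV _)) -(sqr_sqrtr (ip_ge0 hU _)) -!/(ipnorm _ _) fnorm.
move=> u v; have := fsq (u + v).
rewrite fD !(ipDl hV) !(ipDr hV) !(ipDl hU) !(ipDr hU) !fsq (ipC hV (f v)) (ipC hU v).
lra.
Qed.

Section ConvexCombination.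
Variable R : realType.

Definition convn (V : lmodType R) (A : V -> Prop) (N : nat) (y : V) : Prop :=
  exists (w : 'I_N -> R) (p : 'I_N -> V),
    [/\ forall i, 0 <= w i, \sum_(i < N) w i = 1, forall i, A (p i)
      & y = \sum_(i < N) w i *: p i].

Lemma convn_conv (V : lmodType R) (A : V -> Prop) N y : convn A N y -> conv A y.
Proof. by exists N. Qed.

Lemma convn_segment (V : lmodType R) (A : V -> Prop) N p a t :
  convn A N p -> A a -> 0 <= t <= 1 -> convn A N.+1 (t *: a + (1 - t) *: p).
Proof.
move=> [w [q [w_ge0 w_sum1 Aq ->]]] Aa /andP[t_ge0 t_le1].
exists [ffun i => if unlift ord0 i is Some k then (1 - t) * w k else t].
exists [ffun i => if unlift ord0 i is Some k then q k else a].
split => [i||i|].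
- rewrite ffunE; case: unlift => // k.
  by rewrite mulr_ge0 ?subr_ge0.
- rewrite big_ord_recl ffunE unlift_none.
  under eq_bigr do rewrite ffunE liftK.
  by rewrite -mulr_sumr w_sum1 mulr1 addrC subrK.
- by rewrite ffunE; case: unlift.
- rewrite big_ord_recl !ffunE unlift_none scaler_sumr.
  by under [in RHS]eq_bigr do rewrite !ffunE liftK -scalerA.
Qed.

Lemma affine_dependence n (p : 'I_n.+2 -> 'rV[R]_n) :
  exists e : 'I_n.+2 -> R,
    [/\ \sum_i e i = 0, \sum_i e i *: p i = 0 & exists j, 0 < e j].
Proof.
pose D : 'M[R]_(n.+1, n) := \matrix_(k, j) (p (lift ord0 k) - p ord0) 0 j.
have : kermx D != 0.
  rewrite kermx_eq0; apply/negP => /eqP rkD.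
  by have := rank_leq_col D; rewrite rkD ltnn.
move=> /matrix0Pn [i0 [k0 c_k0]].
pose c := row i0 (kermx D).
have cD : \sum_k c 0 k *: p (lift ord0 k) = (\sum_k c 0 k) *: p ord0.
  apply/eqP; rewrite -subr_eq0 scaler_suml -sumrB.
  have : c *m D = 0 by rewrite /c -row_mul mulmx_ker row0.
  rewrite mulmx_sum_row => cD0; rewrite -[X in _ == X]cD0; apply/eqP/eq_bigr => k _.
  by rewrite -scalerBr; congr (_ *: _); apply/rowP => j; rewrite !mxE.
pose e i := if unlift ord0 i is Some k then c 0 k else - \sum_k c 0 k.
have eL k : e (lift ord0 k) = c 0 k by rewrite /e liftK.
have e0 : e ord0 = - \sum_k c 0 k by rewrite /e unlift_none.
have e_sum0 : \sum_i e i = 0.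
  by rewrite big_ord_recl e0 (eq_bigr _ (fun k _ => eL k)) addNr.
exists e; split => //.
  rewrite big_ord_recl e0 (eq_bigr _ (fun k _ => congr1 (fun r => r *: _) (eL k))).
  by rewrite cD scaleNr addNr.
apply/not_existsP => e_le0.
have eN_ge0 i : 0 <= - e i by rewrite oppr_ge0 leNgt; apply/negP; exact: e_le0.
have := @psumr_eq0P _ _ xpredT (fun i => - e i) (fun i _ => eN_ge0 i).
rewrite sumrN e_sum0 oppr0 => /(_ erefl (lift ord0 k0) erefl).
by rewrite eL mxE => /eqP; rewrite oppr_eq0 (negbTE c_k0).
Qed.

Lemma caratheodory_step n (A : 'rV[R]_n -> Prop) y :
  convn A n.+2 y -> convn A n.+1 y.
Proof.
move=> [w [p [w_ge0 w_sum1 Ap ->]]].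
have [e [e_sum0 ep_sum0 [j0 e_j0]]] := affine_dependence p.
(* Shift the weights along [- e] until the first one vanishes. *)
case: (@arg_minP _ R _ j0 (fun i => 0 < e i) (fun i => w i / e i) e_j0).
move=> j e_j jmin.
pose t := w j / e j.
have t_ge0 : 0 <= t by rewrite divr_ge0 // ltW.
pose w' i := w i - t * e i.
have w'_ge0 i : 0 <= w' i.
  rewrite subr_ge0; have [e_i|e_i] := ltP 0 (e i).
    by rewrite -ler_pdivlMr // jmin.
  by apply: le_trans (w_ge0 i); rewrite mulr_ge0_le0.
have w'_j : w' j = 0 by rewrite /w' /t divfK ?subrr // gt_eqF.
have w'_sum1 : \sum_i w' i = 1 by rewrite sumrB -mulr_sumr e_sum0 mulr0 subr0.
have w'p : \sum_i w' i *: p i = \sum_i w i *: p i.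
  under eq_bigr do rewrite scalerBl -scalerA.
  by rewrite sumrB -scaler_sumr ep_sum0 scaler0 subr0.
exists (fun k => w' (lift j k)), (fun k => p (lift j k)); split => //.
  by rewrite -w'_sum1 [RHS](bigD1_ord j) //= w'_j add0r.
by rewrite -w'p [LHS](bigD1_ord j) //= w'_j scale0r add0r.
Qed.

End ConvexCombination.

Local Open Scope classical_set_scope.

Lemma mx_entry_continuous (T : puniformType) m n (i : 'I_m) (j : 'I_n) :
  continuous (fun M : 'M[T]_(m, n) => M i j).
Proof.
move=> M; apply/(cvg_entourageP (fmap_filter _ (nbhs_filter M))) => A entA.
have := (iffLR (@cvg_mx_entourageP T m n (nbhs M) _ M)) (@cvg_id _ (nbhs M)) A entA.
by move=> /(_ (nbhs_filter M)); apply: filterS => N /(_ i j); rewrite inE.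
Qed.

Section ConvnCompact.
Variables (R : realType) (V : normedModType R).

Definition simplex N : set 'rV[R]_N :=
  [set w | (forall i, 0 <= w ord0 i) /\ \sum_i w ord0 i = 1].
Arguments simplex N : clear implicits.

Lemma compact_simplex N : compact (simplex N).
Proof.
have closed_ge0 : closed [set w : 'rV[R]_N | forall i, 0 <= w ord0 i].
  rewrite [X in closed X](_ : _ =
      \bigcap_i ((fun w : 'rV[R]_N => w ord0 i) @^-1` [set x | 0 <= x])).
    apply: closed_bigI => i _; apply: preimage_closed; last exact: closed_ge.
    by move=> w _; exact: coord_continuous.
  by apply/seteqP; split => w /= w_ge0 i; [move=> _; exact: w_ge0 | exact: w_ge0].
have closed_sum1 : closed [set w : 'rV[R]_N | \sum_i w ord0 i = 1].
  apply: (preimage_closed (f := fun w : 'rV[R]_N => \sum_i w ord0 i) (D := [set x | x = 1])).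
    move=> w _; apply: continuous_big => [|i _]; first exact: add_continuous.
    exact: coord_continuous.
  exact: closed_eq.
have box := @rV_compact R N (fun=> `[0, 1]) (fun=> @segment_compact R 0 1).
apply: subclosed_compact (closedI closed_ge0 closed_sum1) box _.
move=> w [/= w_ge0 w_sum1] k /=; rewrite in_itv /= w_ge0 -w_sum1.
by rewrite (bigD1 k) //= lerDl sumr_ge0.
Qed.

Definition convex_comb N (q : 'rV[R]_N * 'rV[V]_N) : V :=
  \sum_i q.1 ord0 i *: q.2 ord0 i.

Lemma convex_comb_continuous N : continuous (@convex_comb N).
Proof.
apply: continuous_big => [|i _]; first exact: add_continuous.
move=> q; have fst_q : {for q, continuous fst} by apply: cvg_fst.
have snd_q : {for q, continuous snd} by apply: cvg_snd.
apply: continuousZ.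
  exact (@continuous_comp _ _ _ fst (fun w : 'rV[R]_N => w ord0 i) q
            fst_q (@coord_continuous R 1 N ord0 i q.1)).
exact (@continuous_comp _ _ _ snd (fun p : 'rV[V]_N => p ord0 i) q
          snd_q (@mx_entry_continuous V 1 N ord0 i q.2)).
Qed.

Lemma convnE (A : V -> Prop) N :
  convn A N =
  @convex_comb N @` (simplex N `*` [set v : 'rV[V]_N | forall i, A (v ord0 i)]).
Proof.
apply/seteqP; split=> [y [w [p [w_ge0 w_sum1 Ap ->]]] | _ [[w p] [[/= w_ge0 w_sum1] Ap] <-]].
  exists (\row_i w i, \row_i p i); last by apply: eq_bigr => i _; rewrite !mxE.
  split; first split.
  - by move=> i; rewrite mxE.
  - by under eq_bigr do rewrite mxE.
  - by move=> i /=; rewrite mxE.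
by exists (w ord0), (p ord0).
Qed.

Lemma compact_convn (A : V -> Prop) N : compact A -> compact (convn A N).
Proof.
move=> A_compact; rewrite convnE; apply: continuous_compact.
  exact/continuous_subspaceT/convex_comb_continuous.
by apply: compact_setX; [exact: compact_simplex | exact: (@rV_compact V N (fun=> A))].
Qed.

End ConvnCompact.

Definition support_attained (R : realType) (V : lmodType R) (ip : V -> V -> R)
    (A : V -> Prop) : Prop :=
  forall z, exists2 a0, A a0 & forall a, A a -> ip a z <= ip a0 z.

Section RowInnerProduct.
Variables (R : realType) (n : nat) (b : 'rV[R]_n -> 'rV[R]_n -> R).
Hypothesis hb : inner_product b.

Lemma ip_delta_expand u v :
  b u v = \sum_i \sum_j (u ord0 i * v ord0 j) * b 'e_i 'e_j.
Proof.
rewrite {1}(row_sum_delta u) (ip_suml hb); apply: eq_bigr => i _.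
rewrite (ipZl hb) {1}(row_sum_delta v) (ipC hb) (ip_suml hb) mulr_sumr.
by apply: eq_bigr => j _; rewrite (ipZl hb) (ipC hb) mulrA [u _ _ * _]mulrC.
Qed.

Lemma ip_continuous (T : topologicalType) (f g : T -> 'rV[R]_n) :
  continuous f -> continuous g -> continuous (fun t => b (f t) (g t)).
Proof.
move=> f_cont g_cont; rewrite (funext (fun t => ip_delta_expand (f t) (g t))).
have coord_cont (h : T -> 'rV[R]_n) k : continuous h -> continuous (fun t => h t ord0 k).
  move=> h_cont t.
  exact: (continuous_comp (h_cont t) (@coord_continuous R 1 n ord0 k (h t))).
apply: continuous_big => [|i _]; first exact: add_continuous.
apply: continuous_big => [|j _]; first exact: add_continuous.
move=> t; apply: (@continuousM R T (fun t => f t ord0 i * g t ord0 j) (fun=> b 'e_i 'e_j)).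
  by apply: (@continuousM R T (fun t => f t ord0 i)); apply: coord_cont.
exact: cst_continuous.
Qed.

Lemma rV_conv_of_support_le (A : set 'rV[R]_n) y :
  compact A -> (forall z, exists2 a, A a & b y z <= b a z) -> conv A y.
Proof.
move=> A_compact y_le.
pose K := convn A n.+1.
have K0 : K !=set0.
  have [a0 Aa0 _] := y_le 0.
  exists a0, (fun i => (i == ord0)%:R), (fun=> a0); split => //.
    by rewrite (bigD1 ord0) //= big1 ?addr0 // => i /negbTE ->.
  by rewrite -scaler_suml (bigD1 ord0) //= big1 ?addr0 ?scale1r // => i /negbTE ->.
pose dist2 u := b (y - u) (y - u).
have dist2_cont : continuous dist2.
  have yB : continuous (fun u : 'rV[R]_n => y - u).
    by move=> u; apply: continuousB; [exact: cst_continuous | exact: cvg_id].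
  exact: (ip_continuous yB yB).
have K_compact : compact K by exact: compact_convn.
have [p /set_mem Kp p_min] :=
  compact_EVT_min K0 K_compact (continuous_subspaceT dist2_cont).
have p_obtuse a : A a -> b (y - p) (a - p) <= 0.
  move=> Aa; apply: (ip_le0_of_segment_min hb) => t t01.
  have Kt : K (t *: a + (1 - t) *: p) by apply/caratheodory_step/convn_segment.
  have -> : y - p - t *: (a - p) = y - (t *: a + (1 - t) *: p).
    by rewrite scalerBl scale1r scalerBr !opprD !opprK !addrA [y - t *: a - p]addrAC.
  exact/p_min/mem_set.
have [a Aa yp_le] := y_le (y - p).
have : b (y - p) (y - p) <= 0.
  have := p_obtuse a Aa; rewrite (ipBr hb) (ipC hb _ a) (ipC hb _ p) => obtuse.
  by rewrite (ipBl hb); lra.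
move=> /(ip_self_le0_eq0 hb)/eqP; rewrite subr_eq0 => /eqP ->.
exact: convn_conv Kp.
Qed.

Lemma support_attained_ip_bounded (A : set 'rV[R]_n) z :
  support_attained b A -> exists B, forall a, A a -> `|b a z| <= B.
Proof.
move=> A_supp; have [a1 _ a1_max] := A_supp z; have [a2 _ a2_max] := A_supp (- z).
exists (Num.max (b a1 z) (b a2 (- z))) => a Aa.
have ipN u : b u (- z) = - b u z by rewrite -scaleN1r (ipZr hb) mulN1r.
rewrite ler_norml lerNl !le_max -!ipN.
by rewrite a1_max ?a2_max ?orbT.
Qed.

(* The coordinates of [a] are fixed linear combinations of the [b a 'e_j]
   (through the inverse Gram matrix), which are bounded on [A]. *)
Lemma support_attained_bounded (A : set 'rV[R]_n) :
  support_attained b A ->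
  exists M : 'I_n -> R, forall a, A a -> forall k, `|a ord0 k| <= M k.
Proof.
move=> A_supp.
pose Gram : 'M[R]_n := \matrix_(i, j) b 'e_i 'e_j.
have GramE u j : (u *m Gram) ord0 j = b u 'e_j.
  rewrite mxE {2}(row_sum_delta u) (ip_suml hb); apply: eq_bigr => i _.
  by rewrite mxE (ipZl hb).
have Gram_unit : Gram \in unitmx.
  rewrite -row_free_unit; apply: inj_row_free => v vG0; apply: (ip_eq0 hb).
  rewrite {2}(row_sum_delta v) (ipC hb) (ip_suml hb) big1 // => j _.
  by rewrite (ipZl hb) (ipC hb) -GramE vG0 mxE mulr0.
have [B B_bound] := choice (fun j => support_attained_ip_bounded 'e_j A_supp).
exists (fun k => \sum_j B j * `|invmx Gram j k|) => a Aa k.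
have -> : a ord0 k = \sum_j b a 'e_j * invmx Gram j k.
  by rewrite -{1}(mulmxK Gram_unit a) mxE; apply: eq_bigr => j _; rewrite GramE.
apply: le_trans (ler_norm_sum _ _ _) _; apply: ler_sum => j _.
by rewrite normrM ler_wpM2r ?B_bound.
Qed.

(* A limit point [p] of [A] is at distance [0] from the point [a0] of [A]
   maximising [b _ p]: on the sphere, [a0] is also the point nearest to [p]. *)
Lemma support_attained_closed (A : set 'rV[R]_n) r :
  (forall a, A a -> b a a = r) -> support_attained b A -> closed A.
Proof.
move=> A_sphere A_supp p p_cl.
have [a0 Aa0 a0_max] := A_supp p.
pose dist2 u := b (u - p) (u - p).
have dist2_cont : continuous dist2.
  have Bp : continuous (fun u : 'rV[R]_n => u - p).
    by move=> u; apply: continuousB; [exact: cvg_id | exact: cst_continuous].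
  exact: (ip_continuous Bp Bp).
have a0_nearest a : A a -> dist2 a0 <= dist2 a.
  move=> Aa; rewrite /dist2 !(ipBl hb) !(ipBr hb) (A_sphere a0 Aa0) (A_sphere a Aa).
  rewrite (ipC hb p a0) (ipC hb p a).
  by have := a0_max a Aa; lra.
suff /(ip_eq0 hb)/eqP : dist2 a0 = 0 by rewrite subr_eq0 => /eqP <-.
apply/le_anti; rewrite ip_ge0 // andbT leNgt; apply/negP => dist2_gt0.
have : nbhs p (dist2 @^-1` [set s | s < dist2 a0]).
  by apply: dist2_cont; rewrite /dist2 subrr (ip0l hb); exact: lt_nbhsl dist2_gt0.
by move=> /p_cl [a [Aa /= lt_a]]; have := a0_nearest a Aa; lra.
Qed.

Lemma support_attained_compact (A : set 'rV[R]_n) r :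
  (forall a, A a -> b a a = r) -> support_attained b A -> compact A.
Proof.
move=> A_sphere A_supp; have [M M_bound] := support_attained_bounded A_supp.
have box := @rV_compact R n (fun k => `[- M k, M k]) (fun=> @segment_compact R _ _).
apply: subclosed_compact (support_attained_closed A_sphere A_supp) box _.
by move=> a Aa k /=; rewrite in_itv /= -ler_norml; exact: M_bound.
Qed.

End RowInnerProduct.

Lemma inner_product_pullback (R : realType) (U V : lmodType R)
    (f : {linear U -> V}) (ip : V -> V -> R) :
  injective f -> inner_product ip -> inner_product (fun u v => ip (f u) (f v)).
Proof.
move=> f_inj hip; split => [u v|a u v w|u|u].
- exact: ipC.
- by rewrite linearD linearZ /= (ipDZl hip).
- exact: ip_ge0.
- by move/(ip_eq0 hip); rewrite -(linear0 f) => /f_inj.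
Qed.

Lemma conv_linear_preimage (R : realType) (U V : lmodType R)
    (f : {linear U -> V}) (A : V -> Prop) u :
  conv (fun v => A (f v)) u -> conv A (f u).
Proof.
move=> [N [w [p [w_ge0 w_sum1 Ap ->]]]]; exists N, w, (fun i => f (p i)).
by split => //; rewrite linear_sum; apply: eq_bigr => i _; rewrite linearZ.
Qed.

Lemma conv_of_support_le (R : realType) (X : vectType R) (ip : X -> X -> R)
    (A : X -> Prop) r y :
  inner_product ip -> (forall a, A a -> ip a a = r) -> support_attained ip A ->
  (forall z, exists2 a, A a & ip y z <= ip a z) -> conv A y.
Proof.
move=> hip A_sphere A_supp y_le.
pose b u v := ip (r2v u) (r2v v).
have hb : inner_product b := inner_product_pullback (@r2v_inj R X) hip.
pose A' u := A (r2v u).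
have A'_compact : compact A'.
  apply: (support_attained_compact hb (r := r)) => [a /A_sphere // | z].
  have [a0 Aa0 a0_max] := A_supp (r2v z).
  by exists (v2r a0) => [|a Aa]; rewrite /A' /b v2rK //; exact: a0_max.
rewrite -[y]v2rK; apply: conv_linear_preimage.
apply: (rV_conv_of_support_le hb A'_compact) => z.
have [a Aa le_a] := y_le (r2v z).
by exists (v2r a); rewrite /A' /b !v2rK.
Qed.

Section SpectralDecompositionSystem.
Variables (R : realType) (H X : vectType R) (ipH : H -> H -> R) (ipX : X -> X -> R).
Variables (G : Type) (mul : G -> G -> G) (inv : G -> G) (e : G) (act : G -> X -> X).
Variables (gamma : H -> X) (Aidx : Type) (Lambda : Aidx -> X -> H) (tau : X -> X).
Hypotheses (hipH : inner_product ipH) (hipX : inner_product ipX).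
Hypotheses (hG : is_group mul inv e) (hact : isometric_action mul e ipX act).
Hypothesis hsds : spectral_decomposition_system_with ipH ipX act gamma Lambda tau.

Lemma act_ip g u v : ipX (act g u) (act g v) = ipX u v.
Proof. by case: hact => _ _ /(_ g) /(linear_isometry_ip hipX hipX). Qed.

Lemma ip_le_tau u z : ipX u z <= ipX (tau u) (tau z).
Proof.
case: hsds => Lambda_iso [_ _ gamma_Lambda] hC hD; have [a _] := hC 0.
rewrite -(linear_isometry_ip hipX hipH (Lambda_iso a)) -!(gamma_Lambda a).
exact: hD.
Qed.

Lemma orbit_ip_le_tau x a z : orbitS act x a -> ipX a z <= ipX (tau x) (tau z).
Proof.
case: hsds => _ [tau_inv _ _] _ _ [g ->].
by rewrite -(tau_inv g x); exact: ip_le_tau.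
Qed.

(* With [tau x = g x] and [tau z = h z], the bound is attained at [h^-1 g x]. *)
Lemma orbit_support_tau x z :
  exists2 a, orbitS act x a & ipX (tau x) (tau z) = ipX a z.
Proof.
case: hsds => _ [_ tau_orbit _] _ _; case: hG => mulA mul1 mulV.
case: hact => _ act_mul _.
have [g ->] := tau_orbit x; have [h ->] := tau_orbit z.
exists (act (mul (inv h) g) x); first by exists (mul (inv h) g).
by rewrite -[RHS](act_ip h) -act_mul mulA (proj2 (mulV h)) (proj1 (mul1 g)).
Qed.

Lemma orbit_support_attained x : support_attained ipX (orbitS act x).
Proof.
move=> z; have [a0 xa0 a0_tau] := orbit_support_tau x z.
by exists a0 => // a xa; rewrite -a0_tau orbit_ip_le_tau.
Qed.

Lemma conv_orbitP x y :
  conv (orbitS act x) y <-> forall z, ipX y z <= ipX (tau x) (tau z).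
Proof.
split => [[N [w [p [w_ge0 w_sum1 xp ->]]]] z | y_le].
  rewrite (ip_suml hipX) -[leRHS]mul1r -w_sum1 mulr_suml; apply: ler_sum => i _.
  by rewrite (ipZl hipX) ler_wpM2l // orbit_ip_le_tau.
apply: (@conv_of_support_le _ _ _ _ (ipX x x) _ hipX) => [a [g ->]||z].
- exact: act_ip.
- exact: orbit_support_attained.
- by have [a xa a_tau] := orbit_support_tau x z; exists a; rewrite // -a_tau.
Qed.

Lemma tau_gamma Y : tau (gamma Y) = gamma Y.
Proof.
by case: hsds => _ [_ _ gamma_Lambda] hC _; have [a {2}->] := hC Y; rewrite gamma_Lambda.
Qed.

Lemma tau_in_range z : in_range gamma (tau z).
Proof.
by case: hsds => _ [_ _ gamma_Lambda] hC _; have [a _] := hC 0; exists (Lambda a z).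
Qed.

Lemma tau_bound_range x y : in_range gamma x -> in_range gamma y ->
  (forall z, ipX y z <= ipX (tau x) (tau z)) <->
  (forall z, in_range gamma z -> ipX (y - x) z <= 0).
Proof.
move=> [X0 ->] [Y0 ->]; split => [y_le _ [Z ->] | y_le z].
  by rewrite (ipBl hipX) subr_le0; have := y_le (gamma Z); rewrite !tau_gamma.
apply: le_trans (ip_le_tau _ z) _; rewrite !tau_gamma -subr_le0 -(ipBl hipX).
exact/y_le/tau_in_range.
Qed.

End SpectralDecompositionSystem.

Theorem proposition3p8
  (R : realType)
  (H : vectType R) (ipH : H -> H -> R)
  (X : vectType R) (ipX : X -> X -> R)
  (G : Type) (mul : G -> G -> G) (inv : G -> G) (e : G)
  (act : G -> X -> X)
  (gamma : H -> X) (Aidx : Type) (Lambda : Aidx -> X -> H)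
  (tau : X -> X)
  (hipH : inner_product ipH) (hipX : inner_product ipX)
  (hG : is_group mul inv e)
  (hact : isometric_action mul e ipX act)
  (hsds : spectral_decomposition_system_with ipH ipX act gamma Lambda tau)
  (x y : X) :
  (conv (orbitS act x) y <-> (forall z : X, ipX y z <= ipX (tau x) (tau z)))
  /\
  (in_range gamma x -> in_range gamma y ->
     (conv (orbitS act x) y <->
        (forall z : X, in_range gamma z -> ipX (y - x) z <= 0))
     /\
     ((forall z : X, ipX y z <= ipX (tau x) (tau z)) <->
        (forall z : X, in_range gamma z -> ipX (y - x) z <= 0))).
Proof.
have conv_tau := conv_orbitP hipH hipX hG hact hsds x y.
split=> // x_range y_range.
have tau_range := tau_bound_range hipH hipX hsds x_range y_range.
by split=> //; rewrite conv_tau.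
Qed.
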